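(* Let $Y$ be a closed subspace of real Banach spaces $Z$ and $W$, and let $\beta=\mathrm{dens}(Z/Y)$. Suppose the dual unit ball $B(W^* )$, with its weak$^*$ topology, contains a family $\{B_\alpha\}_{\alpha<\beta}$ of pairwise disjoint second category sets such that $B'=\bigcup_{\alpha<\beta}B_\alpha$ satisfies $B'\cap(-B')=\emptyset$. Then there is an isomorphic embedding $E:Z\to m_0(B(W^* ))$ which on $Y$ coincides with the natural embedding $y\mapsto[\,w^*\mapsto w^*(y)\,]$.
   Context: $\mathrm{dens}(V)$ is the density character of a Banach space $V$ (the minimal cardinality of a dense subset). For a compact Hausdorff space $K$: $\ell_\infty(K)$ is the space of bounded real functions on $K$ with the sup norm; $m(K)=\{f\in\ell_\infty(K): \mathrm{supp}(f)\text{ is a first category set in }K\}$; $m_0(K)=\ell_\infty(K)/m(K)$ with the quotient norm, and $[f]$ denotes the class of $f$. Here $K=B(W^* )$ with the weak$^*$ topology. *)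

From HB Require Import structures.
From mathcomp Require Import all_boot all_order all_algebra.
From mathcomp Require Import all_classical all_reals all_analysis.
Set Implicit Arguments. Unset Strict Implicit. Unset Printing Implicit Defensive.
Import Order.TTheory GRing.Theory Num.Theory.
Import numFieldNormedType.Exports.
Local Open Scope classical_set_scope.
Local Open Scope ring_scope.

Section Defs.
Variable R : realType.

Section Dual.
Variable W : normedModType R.

(* B(W^* ): linear functionals of norm <= 1 (these are automatically
   continuous), represented as functions W -> R. *)
Definition dual_ball : set (W -> R) :=
  [set f | (forall (a : R) (u v : W), f (a *: u + v) = a * f u + f v) /\
           (forall w : W, `|f w| <= `|w|)].

Definition wstar_open (U : set (W -> R)) : Prop :=
  U `<=` dual_ball /\
  forall f, U f -> exists (S : set W) (e : R), finite_set S /\ 0 < e /\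
     [set g | dual_ball g /\ forall w, S w -> `|g w - f w| < e] `<=` U.

Definition wstar_closure (A : set (W -> R)) : set (W -> R) :=
  [set f | dual_ball f /\ forall U, wstar_open U -> U f -> U `&` A !=set0].

Definition wstar_interior (A : set (W -> R)) : set (W -> R) :=
  [set f | exists U, wstar_open U /\ U f /\ U `<=` A].

Definition wstar_nowhere_dense (A : set (W -> R)) : Prop :=
  A `<=` dual_ball /\ wstar_interior (wstar_closure A) = set0.

Definition wstar_first_category (A : set (W -> R)) : Prop :=
  A `<=` dual_ball /\
  exists An : nat -> set (W -> R),
    (forall n, wstar_nowhere_dense (An n)) /\ A `<=` \bigcup_n An n.

Definition wstar_second_category (A : set (W -> R)) : Prop :=
  A `<=` dual_ball /\ ~ wstar_first_category A.

(* elements of l_oo(K) are represented by functions (W -> R) -> R;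
   only their values on K = dual_ball matter. *)
Definition Kbounded (f : (W -> R) -> R) : Prop :=
  exists M : R, forall k, dual_ball k -> `|f k| <= M.

Definition Ksupport (f : (W -> R) -> R) : set (W -> R) :=
  [set k | dual_ball k /\ f k != 0].

Definition mK (f : (W -> R) -> R) : Prop :=
  Kbounded f /\ wstar_first_category (Ksupport f).

Definition Ksupnorm (f : (W -> R) -> R) : R :=
  sup [set `|f k| | k in dual_ball].

(* quotient norm of the class [f] in m_0(K) = l_oo(K)/m(K) *)
Definition m0norm (f : (W -> R) -> R) : R :=
  inf [set Ksupnorm (f \- g) | g in mK].

End Dual.

Section Quot.
Variables (Y Z : normedModType R) (iZ : Y -> Z).

Definition quot_norm (z : Z) : R := inf [set `|z - iZ y| | y in [set: Y]].

Definition quot_dense (D : set Z) : Prop :=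
  forall (z : Z) (e : R), 0 < e -> exists2 d, D d & quot_norm (z - d) < e.

(* D is a dense subset of Z/Y of minimal cardinality, i.e.
   #D = dens(Z/Y). *)
Definition quot_dens_witness (D : set Z) : Prop :=
  quot_dense D /\ forall D' : set Z, quot_dense D' -> (D #<= D')%card.
End Quot.

End Defs.

(* Hahn-Banach extends every functional [k] of [B(W^* )] from [Y] to a
   functional [L_k] on [Z] of norm at most 1, and gives for each point [d] of
   a dense subset of [Z/Y] a norm-one functional [phi_d] vanishing on [Y] and
   norming [d + Y].  Put [E z k = L_k z + phi_a z] on [B_a],
   [E z k = - L_{-k} z + phi_a z] on [-B_a], and [E z k = L_k z] elsewhere.
   On the unit ball [E] is exactly linear in [z] and agrees with the natural
   embedding on [Y], so the only issue is the lower bound of the norm of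
   [[E z]] in [m_0].  Since [E z k + E z (-k) = 2 phi_a z] on [B_a], and a
   second category set is not covered by a first category set and its
   antipode, [||[E z]|| >= sup_a phi_a z = ||z + Y||].  Dually, a nonempty
   weak*-open set is of second category (Baire category theorem for the
   compact ball), which gives [||[E z]|| >= ||y||/2 - 2 ||z - y||] for every
   [y] in [Y]; the two bounds together give [||[E z]|| >= ||z|| / 10]. *)
From HB Require Import structures.
From mathcomp Require Import all_boot all_order all_algebra.
From mathcomp Require Import all_classical all_reals all_analysis.
From mathcomp.algebra_tactics Require Import ring lra.
Set Implicit Arguments.
Unset Strict Implicit.
Unset Printing Implicit Defensive.
Import Order.TTheory GRing.Theory Num.Theory.
Import numFieldNormedType.Exports.
Local Open Scope classical_set_scope.
Local Open Scope ring_scope.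

Section HahnBanach.
Variables (R : realType) (Z : normedModType R).

(* Partial extensions are encoded by their graphs, so that Zorn's lemma can
   run over sets ordered by inclusion. *)
Definition dominated_graph (G : set (Z * R)) :=
  [/\ G (0, 0),
      forall a z1 r1 z2 r2, G (z1, r1) -> G (z2, r2) ->
        G (a *: z1 + z2, a * r1 + r2),
      forall z r r', G (z, r) -> G (z, r') -> r = r' &
      forall z r, G (z, r) -> r <= `|z|].

Lemma dominated_graph_scale G a z r :
  dominated_graph G -> G (z, r) -> G (a *: z, a * r).
Proof. by case=> G0 Gcl _ _ Gz; have := Gcl a _ _ _ _ Gz G0; rewrite !addr0. Qed.

Lemma dominated_graph_gap G z0 : dominated_graph G ->
  exists c, forall z r, G (z, r) -> r - `|z - z0| <= c /\ c <= `|z + z0| - r.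
Proof.
case=> G0 Gcl _ Gdom.
pose S := [set x | exists z r, G (z, r) /\ x = r - `|z - z0|].
have S_ub z' r' : G (z', r') -> ubound S (`|z' + z0| - r').
  move=> Gz' _ [z [r [Gz ->]]].
  have := Gdom _ _ (Gcl 1 _ _ _ _ Gz Gz'); rewrite !scale1r !mul1r => Gzz'.
  rewrite lerBrDr addrAC lerBlDr (le_trans Gzz') //.
  rewrite (_ : z + z' = (z' + z0) + (z - z0)); first exact: ler_normD.
  by rewrite [RHS]addrC addrA addrAC subrK.
have S0 : S !=set0 by exists (0 - `|0 - z0|), 0, 0.
have Sb : has_ubound S by exists (`|0 + z0| - 0); exact: S_ub G0.
exists (sup S) => z r Gz; split; first by apply: ub_le_sup => //; exists z, r.
by apply: ge_sup => //; exact: S_ub.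
Qed.

Lemma dominated_graph_shift G z0 c : dominated_graph G ->
  (forall z r, G (z, r) -> r - `|z - z0| <= c /\ c <= `|z + z0| - r) ->
  forall z r t, G (z, r) -> r + t * c <= `|z + t *: z0|.
Proof.
move=> gG gap z r t Gz.
have [t0|t0|->] := ltgtP t 0; last first.
- by rewrite scale0r mul0r !addr0; case: gG => _ _ _; apply.
- have [_ +] := gap _ _ (dominated_graph_scale t^-1 gG Gz).
  move=> /(ler_wpM2l (ltW t0)); rewrite mulrBr mulrA mulfV ?gt_eqF // mul1r.
  have -> : `|z + t *: z0| = t * `|t^-1 *: z + z0|.
    rewrite -[t in t * _]gtr0_norm // -normrZ scalerDr scalerA mulfV ?gt_eqF //.
    by rewrite scale1r.
  lra.
- have [s s0 ->] : exists2 s, 0 < s & t = - s.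
    by exists (- t); rewrite ?opprK ?oppr_gt0.
  have [+ _] := gap _ _ (dominated_graph_scale s^-1 gG Gz).
  move=> /(ler_wpM2l (ltW s0)); rewrite mulrBr mulrA mulfV ?gt_eqF // mul1r.
  have -> : `|z + - s *: z0| = s * `|s^-1 *: z - z0|.
    rewrite -[s in s * _]gtr0_norm // -normrZ scalerBr scalerA mulfV ?gt_eqF //.
    by rewrite scale1r scaleNr.
  lra.
Qed.

Lemma dominated_graph_extend G z0 :
  dominated_graph G -> (forall r, ~ G (z0, r)) ->
  exists2 G', dominated_graph G' & G `<` G'.
Proof.
move=> gG z0G; have [c gap] := dominated_graph_gap z0 gG.
have [G0 Gcl Gfun _] := gG.
pose G' := [set p | exists z r t, G (z, r) /\ p = (z + t *: z0, r + t * c)].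
exists G'; last first.
  split=> [[z r] Gz|G'G]; first by exists z, r, 0; rewrite scale0r mul0r !addr0.
  by apply: (z0G c); apply: G'G; exists 0, 0, 1; rewrite scale1r mul1r !add0r.
split.
- by exists 0, 0, 0; rewrite scale0r mul0r !addr0.
- move=> a _ _ _ _ [z1 [r1 [t1 [G1 [-> ->]]]]] [z2 [r2 [t2 [G2 [-> ->]]]]].
  exists (a *: z1 + z2), (a * r1 + r2), (a * t1 + t2); split; first exact: Gcl.
  congr pair; last by ring.
  by rewrite scalerDl !scalerDr scalerA addrACA.
- move=> z r r' [z1 [r1 [t1 [G1 [-> ->]]]]] [z2 [r2 [t2 [G2 [e ->]]]]].
  have [et|t12] := eqVneq t1 t2.
    move: e; rewrite et => /(congr1 (+%R^~ (- (t2 *: z0)))); rewrite /= !addrK.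
    by move=> e; rewrite e in G1; rewrite (Gfun _ _ _ G1 G2).
  exfalso; apply: (z0G ((t1 - t2)^-1 * (-1 * r1 + r2))).
  have -> : z0 = (t1 - t2)^-1 *: (-1 *: z1 + z2).
    have -> : z2 = z1 + t1 *: z0 - t2 *: z0 by rewrite e addrK.
    by rewrite scaleN1r addrA addKr -scalerBl scalerA mulVf ?scale1r ?subr_eq0.
  by apply: dominated_graph_scale => //; exact: Gcl.
- by move=> _ _ [z [r [t [Gz [-> ->]]]]]; exact: dominated_graph_shift gap _ _ _ Gz.
Qed.

Lemma dominated_graph_bigcup G0 (F : set (set (Z * R))) :
  dominated_graph G0 -> total_on F subset ->
  (forall G, F G -> dominated_graph (G0 `|` G)) ->
  dominated_graph (G0 `|` \bigcup_(G in F) G).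
Proof.
move=> gG0 Ftot gF; set U := G0 `|` _.
have common p q : U p -> U q ->
    exists2 H, dominated_graph H & [/\ H `<=` U, H p & H q].
  have sub_U G : F G -> G0 `|` G `<=` U.
    by move=> FG x [G0x|Gx]; [left|right; exists G].
  case=> [G0p|[G FG Gp]]; case=> [G0q|[G' FG' G'q]].
  - by exists G0 => //; split => // x; left.
  - by exists (G0 `|` G'); [exact: gF|split; [exact: sub_U|left|right]].
  - by exists (G0 `|` G); [exact: gF|split; [exact: sub_U|right|left]].
  - have [GG'|G'G] := Ftot _ _ FG FG'.
      exists (G0 `|` G'); first exact: gF.
      by split; [exact: sub_U|right; exact: GG'|right].
    by exists (G0 `|` G); [exact: gF|split; [exact: sub_U|right|right; exact: G'G]].
split.
- by left; case: gG0.
- move=> a z1 r1 z2 r2 U1 U2; have [H [_ Hcl _ _] [HU H1 H2]] := common _ _ U1 U2.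
  exact/HU/Hcl.
- move=> z r r' U1 U2; have [H [_ _ Hfun _] [_ H1 H2]] := common _ _ U1 U2.
  exact: Hfun H1 H2.
- move=> z r U1; have [H [_ _ _ Hdom] [_ H1 _]] := common _ _ U1 U1.
  exact: Hdom H1.
Qed.

Lemma hahn_banach (V : lmodType R) (T : V -> Z) (g : V -> R) :
  linear T -> scalar g -> (forall v, g v <= `|T v|) ->
  exists L : Z -> R,
    [/\ scalar L, forall v, L (T v) = g v & forall z, `|L z| <= `|z|].
Proof.
move=> Tlin glin gT.
have T0 : T 0 = 0 by have := Tlin (-1) 0 0; rewrite scaler0 addr0 scaleN1r addNr.
have g0 : g 0 = 0 by have := glin (-1) 0 0; rewrite scaler0 addr0 mulN1r addNr.
pose G0 := [set p | exists v, p = (T v, g v)].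
have gG0 : dominated_graph G0.
  split.
  - by exists 0; rewrite T0 g0.
  - move=> a _ _ _ _ [v1 [-> ->]] [v2 [-> ->]].
    by exists (a *: v1 + v2); rewrite Tlin glin.
  - move=> _ _ _ [v1 [-> ->]] [v2 [e ->]].
    have := gT ((-1) *: v2 + v1); have := gT ((-1) *: v1 + v2).
    by rewrite !Tlin !glin e !scaleN1r !addNr normr0; lra.
  - by move=> _ _ [v [-> ->]]; exact: gT.
pose P := [set G | dominated_graph (G0 `|` G)].
have [A [PA Amax]] : exists A, P A /\ forall B, A `<` B -> ~ P B.
  by apply: Zorn_bigcup => F FP Ftot; exact: dominated_graph_bigcup.
have total z : exists r, (G0 `|` A) (z, r).
  apply/not_existsP => zA; have [G' gG' [AG' G'A]] := dominated_graph_extend PA zA.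
  apply: (Amax G').
    split=> [p Ap|G'A']; first by apply: AG'; right.
    by apply: G'A => p /G'A' Ap; right.
  by rewrite /P /=; move/setUidPr: (subset_trans (@subsetUl _ G0 A) AG') => ->.
have [L AL] := choice total; have [A0 Acl Afun Adom] := PA.
exists L; split.
- by move=> a u v; apply: (Afun (a *: u + v)) => //; exact: Acl.
- by move=> v; apply: (Afun (T v)) => //; left; exists v.
- move=> z; rewrite ler_norml Adom // andbT lerNl.
  have := Adom _ _ (Acl (-1) _ _ _ _ (AL z) A0).
  by rewrite scaleN1r mulN1r !addr0 normrN.
Qed.

End HahnBanach.

Section Functionals.
Variables (R : realType) (Y Z : normedModType R).

Lemma scalarD (V : lmodType R) (f : V -> R) u v :
  scalar f -> f (u + v) = f u + f v.
Proof. by move=> flin; rewrite -[u in LHS]scale1r flin mul1r. Qed.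

Lemma quot_norm_ge0 (iZ : Y -> Z) z : 0 <= quot_norm iZ z.
Proof. by apply: lb_le_inf; [exists `|z - iZ 0|, 0|move=> _ [y _ <-]]. Qed.

Lemma quot_norm_le (iZ : Y -> Z) z y : quot_norm iZ z <= `|z - iZ y|.
Proof. by apply: ge_inf; [exists 0 => _ [y' _ <-]|exists y]. Qed.

Lemma quot_norm_lt (iZ : Y -> Z) z e :
  quot_norm iZ z < e -> exists y, `|z - iZ y| < e.
Proof.
move=> /(inf_lt (ex_intro _ `|z - iZ 0| (ex_intro2 _ _ 0 I erefl))).
by case=> _ [y _ <-]; exists y.
Qed.

Lemma quot_norming_functional (iZ : {linear Y -> Z}) z0 :
  exists psi : Z -> R, [/\ scalar psi, forall y, psi (iZ y) = 0,
    psi z0 = quot_norm iZ z0 & forall z, `|psi z| <= quot_norm iZ z].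
Proof.
pose T (p : Y * R^o) : Z := iZ p.1 + p.2 *: z0.
pose g (p : Y * R^o) : R := p.2 * quot_norm iZ z0.
have Tlin : linear T.
  move=> a [u1 t1] [u2 t2]; rewrite /T /= linearD linearZ /=.
  have e : (a *: t1) *: z0 = a *: (t1 *: z0) by rewrite scalerA.
  by rewrite scalerDl scalerDr e addrACA.
have glin : scalar g.
  by move=> a [u1 t1] [u2 t2]; rewrite /g /= -[a *: t1]/(a * t1); ring.
have gT p : g p <= `|T p|.
  case: p => y t; rewrite /T /g /=.
  have [t0|t0] := leP t 0.
    by apply: le_trans (normr_ge0 _); rewrite mulr_le0_ge0 ?quot_norm_ge0.
  have -> : iZ y + t *: z0 = t *: (z0 - iZ (- t^-1 *: y)).
    rewrite linearZ /= scalerBr scalerA mulrN mulfV ?gt_eqF // scaleN1r opprK.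
    by rewrite addrC.
  by rewrite normrZ gtr0_norm // ler_pM2l // quot_norm_le.
have [L [Llin LT Lle]] := hahn_banach Tlin glin gT.
have LY y : L (iZ y) = 0.
  by have := LT (y, 0); rewrite /T /g /= scale0r addr0 mul0r.
exists L; split => //.
  by have := LT (0, 1); rewrite /T /g /= linear0 add0r scale1r mul1r.
move=> u; apply: lb_le_inf; first by exists `|u - iZ 0|, 0.
move=> _ [y _ <-]; apply: le_trans (Lle _).
by have := Llin (-1) (iZ y) u; rewrite LY mulr0 add0r scaleN1r addrC => <-.
Qed.

Lemma ler_quot_normD (iZ : {linear Y -> Z}) u v :
  quot_norm iZ (u + v) <= quot_norm iZ u + quot_norm iZ v.
Proof.
have [psi [psi_lin _ <- psi_le]] := quot_norming_functional iZ (u + v).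
rewrite scalarD // (le_trans (ler_norm _)) // (le_trans (ler_normD _ _)) //.
exact: lerD.
Qed.

(* [phi a] norms [d a + Y]; density of the [d a] makes the family norming on
   all of [Z/Y]. *)
Lemma quot_norming_family (iZ : {linear Y -> Z}) (I : Type) (D : set Z)
    (d : I -> Z) : quot_dense iZ D -> D `<=` range d ->
  exists phi : I -> Z -> R, [/\ forall a, scalar (phi a),
    forall a y, phi a (iZ y) = 0, forall a z, `|phi a z| <= `|z| &
    forall z e, 0 < e -> exists a, quot_norm iZ z - e < phi a z].
Proof.
move=> Ddense Dd; have [psi psiP] := choice (quot_norming_functional iZ).
exists (fun a => psi (d a)); split.
- by move=> a; have [] := psiP (d a).
- by move=> a; have [] := psiP (d a).
- move=> a z; have [_ _ _ psi_le] := psiP (d a); apply: le_trans (psi_le z) _.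
  by have := quot_norm_le iZ z 0; rewrite linear0 subr0.
move=> z e e0; have [x Dx zx] : exists2 x, D x & quot_norm iZ (z - x) < e / 2.
  by apply: Ddense; rewrite divr_gt0.
have [a _ dax] := Dd x Dx; exists a; rewrite dax.
have [psi_lin _ psi_x psi_le] := psiP x.
have psi_zx : psi x z = psi x x + psi x (z - x) by rewrite -scalarD // subrKC.
have qz := ler_quot_normD iZ x (z - x); rewrite subrKC in qz.
have : - quot_norm iZ (z - x) <= psi x (z - x).
  by rewrite lerNl (le_trans (ler_norm _)) // normrN psi_le.
rewrite psi_zx psi_x; lra.
Qed.

Lemma norming_functional (W : normedModType R) (w : W) :
  exists2 h, dual_ball h & h w = `|w|.
Proof.
pose T (t : R^o) : W := t *: w.
have Tlin : linear T by move=> a u v; rewrite /T scalerDl scalerA.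
have glin : scalar (fun t : R^o => t * `|w|).
  by move=> a u v; rewrite -[a *: u]/(a * u); ring.
have gT t : t * `|w| <= `|T t| by rewrite /T normrZ ler_wpM2r // ler_norm.
have [L [Llin LT Lle]] := hahn_banach Tlin glin gT.
by exists L; [split|have := LT 1; rewrite /T scale1r mul1r].
Qed.

Lemma dual_ball_extend (W : normedModType R) (iZ : {linear Y -> Z})
    (iW : {linear Y -> W}) (k : W -> R) :
  (forall y, `|iW y| <= `|iZ y|) -> dual_ball k ->
  exists L : Z -> R,
    [/\ scalar L, forall y, L (iZ y) = k (iW y) & forall z, `|L z| <= `|z|].
Proof.
move=> iWZ [klin kle]; apply: hahn_banach.
- by move=> a u v; rewrite linearD linearZ.
- by move=> a u v; rewrite linearD linearZ /= klin.
- by move=> y; rewrite (le_trans (ler_norm _)) // (le_trans (kle _)).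
Qed.

End Functionals.

Section WeakStarCategory.
Variables (R : realType) (W : normedModType R).
Implicit Types (f g k : W -> R) (A U V : set (W -> R)) (S : set W).

Definition wball f S e :=
  [set g | dual_ball g /\ forall w, S w -> `|g w - f w| < e].
Definition wcball f S e :=
  [set g | dual_ball g /\ forall w, S w -> `|g w - f w| <= e].

Lemma wball_sub_wcball f S e : wball f S e `<=` wcball f S e.
Proof. by move=> g [gb gf]; split => // w /gf/ltW. Qed.

Lemma wcball_sub_wball f S e : 0 < e -> wcball f S (e / 2) `<=` wball f S e.
Proof. by move=> e0 g [gb gf]; split => // w /gf; lra. Qed.

Lemma wcball_center f S e : dual_ball f -> 0 <= e -> wcball f S e f.
Proof. by move=> fb e0; split => // w _; rewrite subrr normr0. Qed.

Lemma finite_set_min_gt0 S (h : W -> R) : finite_set S ->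
  (forall w, S w -> 0 < h w) -> exists2 d, 0 < d & forall w, S w -> d <= h w.
Proof.
move=> /finite_seqP[s ->] {S}; elim: s => [|x s IHs] hpos.
  by exists 1 => // w /=; rewrite in_nil.
have [d d0 dh] : exists2 d, 0 < d & forall w, [set` s] w -> d <= h w.
  by apply: IHs => w ws; apply: hpos; rewrite /= in_cons ws orbT.
have hx0 : 0 < h x by apply: hpos; rewrite /= in_cons eqxx.
exists (Num.min (h x) d); first by rewrite lt_min hx0 d0.
move=> w /=; rewrite in_cons => /orP[/eqP ->|ws]; first by rewrite ge_min lexx.
by rewrite ge_min dh ?orbT.
Qed.

Lemma wball_open f S e : finite_set S -> wstar_open (wball f S e).
Proof.
move=> fS; split=> [g []//|g [gb gf]].
have gap w : S w -> 0 < e - `|g w - f w| by rewrite subr_gt0 => /gf.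
have [d d0 dg] := finite_set_min_gt0 fS gap.
exists S, d; split=> //; split=> // k [kb kg]; split=> // w Sw.
rewrite -(subrKA (g w)) (le_lt_trans (ler_normD _ _)) //.
by have := kg w Sw; have := dg w Sw; rewrite /=; lra.
Qed.

Lemma wstar_open_lt (w : W) c : wstar_open [set k | dual_ball k /\ c < k w].
Proof.
split=> [k []//|f [fb fw]]; exists [set w], (f w - c).
split; first exact: finite_set1.
split=> [|g [gb gf]]; first by rewrite subr_gt0.
by split=> //; have := gf w erefl; rewrite ltr_norml => /andP[]; lra.
Qed.

Lemma wstar_openI_wball U V f : wstar_open U -> U f -> wstar_open V -> V f ->
  exists S e, [/\ finite_set S, 0 < e & wball f S e `<=` U `&` V].
Proof.
move=> [_ oU] Uf [_ oV] Vf.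
have [S1 [e1 [fS1 [e10 S1U]]]] := oU f Uf.
have [S2 [e2 [fS2 [e20 S2V]]]] := oV f Vf.
exists (S1 `|` S2), (Num.min e1 e2); split; rewrite ?finite_setU ?lt_min ?e10 //.
move=> g [gb gf]; split; [apply: S1U|apply: S2V]; split=> // w Sw;
  apply: lt_le_trans (gf w _) _; rewrite ?ge_min ?lexx ?orbT //; by [left|right].
Qed.

Section ProductTopology.
Import ArrowAsProduct.

Let box : set (W -> R) := [set f | forall w, `[- `|w|, `|w|]%classic (f w)].

Let box_compact : compact box.
Proof.
exact: (@tychonoff W (fun _ => R) (fun w => `[- `|w|, `|w|]%classic)
  (fun w => @segment_compact R _ _)).
Qed.

Let eval_continuous (w : W) : continuous (fun f : W -> R => f w).
Proof. exact: (@proj_continuous W (fun _ => R) w). Qed.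

Let closed_eval (w : W) (A : set R) : closed A -> closed [set f : W -> R | A (f w)].
Proof. by move=> cA; move: (@eval_continuous w) => /continuous_closedP; apply. Qed.

Let closed_normr_le (c : R) : closed [set x : R | `|x| <= c].
Proof.
exact: (proj1 (continuous_closedP _) (@norm_continuous _ R^o)) _ (@closed_le R c).
Qed.

Let closed_scalar a u v :
  closed [set f : W -> R | f (a *: u + v) = a * f u + f v].
Proof.
have cont : continuous (fun f : W -> R => f (a *: u + v) - (a * f u + f v)).
  move=> f; apply: (@continuousB _ _ _ (fun f : W -> R => f (a *: u + v))
    (fun f => a * f u + f v)); first exact: eval_continuous.
  apply: (@continuousD _ _ _ (fun f : W -> R => a * f u) (fun f => f v));
    last exact: eval_continuous.
  apply: (@continuousM _ _ (fun _ : W -> R => a) (fun f => f u));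
    [exact: cst_continuous|exact: eval_continuous].
have := (proj1 (continuous_closedP _) cont) _ (@closed_eq R 0).
congr closed; apply/seteqP; split=> f /=; last by move=> ->; rewrite subrr.
by move/eqP; rewrite subr_eq0 => /eqP.
Qed.

Let closed_dual_ball : closed (@dual_ball R W).
Proof.
have -> : (@dual_ball R W) =
    \bigcap_(t in [set: R * W * W])
      [set f | f (t.1.1 *: t.1.2 + t.2) = t.1.1 * f t.1.2 + f t.2]
    `&` \bigcap_(w in [set: W]) [set f | `|f w| <= `|w|].
  apply/seteqP; split => f.
    by case=> flin fle; split => [[[a u] v]|w] _ /=; [exact: flin|exact: fle].
  by case=> flin fle; split => [a u v|w]; [exact: (flin (a, u, v))|exact: fle].
apply: closedI; first by apply: closed_bigI => [[[a u] v]] _; exact: closed_scalar.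
by apply: closed_bigI => w _; exact: (closed_eval (@closed_normr_le `|w|)).
Qed.

Let closed_wcball f S e : closed (wcball f S e).
Proof.
have -> : wcball f S e =
    @dual_ball R W `&` \bigcap_(w in S) [set g : W -> R | `|g w - f w| <= e].
  by apply/seteqP; split => g [gb gf]; split => // w /gf.
apply: closedI; first exact: closed_dual_ball.
apply: closed_bigI => w _.
have cont : continuous (fun g : W -> R => g w - f w).
  move=> g; apply: (@continuousB _ _ _ (fun g : W -> R => g w) (fun _ => f w)).
    exact: eval_continuous.
  exact: cst_continuous.
exact: (proj1 (continuous_closedP _) cont) _ (@closed_normr_le e).
Qed.

(* Cantor's intersection theorem, by weak* compactness of the dual ball. *)
Lemma wcball_nested_cap (f : nat -> W -> R) (S : nat -> set W) (e : nat -> R) :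
  (forall n, dual_ball (f n)) -> (forall n, 0 <= e n) ->
  (forall n, wcball (f n.+1) (S n.+1) (e n.+1) `<=` wcball (f n) (S n) (e n)) ->
  exists g, forall n, wcball (f n) (S n) (e n) g.
Proof.
move=> fb e0 Cdec; pose C n := wcball (f n) (S n) (e n).
have Cmono n m : (n <= m)%N -> C m `<=` C n.
  move=> /subnK <-; elim: (m - n)%N => [|k IHk]; first by rewrite add0n.
  by rewrite addSn; apply: subset_trans (Cdec _) IHk.
pose F := filter_from setT C.
have FF : ProperFilter F.
  apply: filter_from_proper; last by move=> n _; exists (f n); exact: wcball_center.
  apply: filter_from_filter; first by exists 0%N.
  move=> i j _ _; exists (maxn i j) => // g Cg.
  by split; apply: (Cmono _ (maxn i j)); rewrite ?leq_maxl ?leq_maxr.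
have Fbox : F box.
  exists 0%N => // g [[_ gle] _] w; rewrite /= in_itv /= -ler_norml; exact: gle.
have [g [_ clg]] := box_compact FF Fbox.
exists g => n; apply: closed_wcball => B nB.
by apply: clg nB; exists n.
Qed.

End ProductTopology.

Lemma wcball_avoid A f S e : wstar_nowhere_dense A -> dual_ball f ->
  finite_set S -> 0 < e -> exists f' S' e', [/\ dual_ball f', finite_set S',
    0 < e', wcball f' S' e' `<=` wcball f S e & wcball f' S' e' `&` A = set0].
Proof.
move=> [_ Aint] fb fS e0; set U := wball f S e.
have oU : wstar_open U by exact: wball_open.
have [f' Uf' Af'] : exists2 f', U f' & ~ wstar_closure A f'.
  apply: contrapT => UA; suff : wstar_interior (wstar_closure A) f by rewrite Aint.
  exists U; split=> //; split; first by split=> // w _; rewrite subrr normr0.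
  by move=> g Ug; apply: contrapT => Ag; apply: UA; exists g.
have [U' [oU' U'f' U'A]] : exists U', [/\ wstar_open U', U' f' & U' `&` A = set0].
  apply: contrapT => noU; apply: Af'; split; first by case: Uf'.
  by move=> V oV Vf'; apply/set0P/negP => /eqP VA; apply: noU; exists V.
have [S' [e' [fS' e'0 sub]]] := wstar_openI_wball oU Uf' oU' U'f'.
exists f', S', (e' / 2); split; rewrite ?divr_gt0 //; first by case: Uf'.
  move=> g /(wcball_sub_wball e'0)/sub[+ _]; exact: wball_sub_wcball.
rewrite -subset0 => g [/(wcball_sub_wball e'0)/sub[_ U'g] Ag].
by rewrite -U'A; split.
Qed.

Theorem wstar_open_second_category U f :
  wstar_open U -> U f -> wstar_second_category U.
Proof.
move=> oU Uf; split; first by case: oU.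
case=> _ [A [Anwd UA]].
pose valid (x : (W -> R) * set W * R) :=
  [/\ dual_ball x.1.1, finite_set x.1.2 & 0 < x.2].
pose C (x : (W -> R) * set W * R) := wcball x.1.1 x.1.2 x.2.
have /choice[next nextP] : forall p : nat * ((W -> R) * set W * R), exists y,
    valid p.2 -> [/\ valid y, C y `<=` C p.2 & C y `&` A p.1 = set0].
  move=> [n [[g S] e]]; have [[/= gb fS e0]|nv] := pselect (valid (g, S, e)).
    have [g' [S' [e' [? ? ? ? ?]]]] := wcball_avoid (Anwd n) gb fS e0.
    by exists (g', S', e').
  by exists (g, S, e) => /nv.
have [S0 [e0 [fS0 [e00 S0U]]]] := oU.2 f Uf.
pose fix xs n := if n is m.+1 then next (m, xs m) else (f, S0, e0 / 2).
have xs_valid n : valid (xs n).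
  elim: n => [|n IHn]; last by case: (nextP (n, xs n) IHn).
  by split; rewrite ?divr_gt0 //; exact: oU.1 f Uf.
have [g Cg] : exists g, forall n, C (xs n) g.
  apply: wcball_nested_cap => n; first by case: (xs_valid n).
    by case: (xs_valid n) => _ _ /ltW.
  by case: (nextP (n, xs n) (xs_valid n)).
have [n _ Ang] := UA g (S0U g (wcball_sub_wball e00 (Cg 0%N))).
case: (nextP (n, xs n) (xs_valid n)) => _ _ /= /seteqP[+ _].
by apply; split; [exact: (Cg n.+1)|].
Qed.

End WeakStarCategory.

Section FirstCategory.
Variables (R : realType) (W : normedModType R).
Implicit Types (f k : W -> R) (A B M U : set (W -> R)).

Lemma dual_ballN k : dual_ball k -> dual_ball (- k).
Proof.
by case=> klin kle; split=> [a u v|w]; rewrite !fctE ?normrN // klin opprD mulrN.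
Qed.

Lemma wstar_openN U : wstar_open U -> wstar_open (-%R @^-1` U).
Proof.
case=> Ub oU; split=> [k /Ub/dual_ballN|f Uf]; first by rewrite opprK.
have [S [e [fS [e0 sub]]]] := oU _ Uf; exists S, e; split=> //; split=> //.
move=> g [gb gf]; apply: sub; split; first exact: dual_ballN.
by move=> w Sw /=; rewrite -opprD normrN gf.
Qed.

Lemma wstar_closureN A k :
  wstar_closure (-%R @^-1` A) k -> wstar_closure A (- k).
Proof.
case=> kb kA; split=> [|U oU Uk]; first exact: dual_ballN.
have [g [Ug Ag]] := kA _ (wstar_openN oU) Uk.
by exists (- g).
Qed.

Lemma wstar_nowhere_denseN A :
  wstar_nowhere_dense A -> wstar_nowhere_dense (-%R @^-1` A).
Proof.
case=> Ab Aint; split=> [k /Ab/dual_ballN|]; first by rewrite opprK.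
rewrite -subset0 => f [V [oV [Vf VA]]].
suff : wstar_interior (wstar_closure A) (- f) by rewrite Aint.
exists (-%R @^-1` V); split; first exact: wstar_openN.
split=> [|g Vg]; first by rewrite /= opprK.
by rewrite -(opprK g); apply: wstar_closureN; exact: VA.
Qed.

Lemma wstar_first_categoryN A :
  wstar_first_category A -> wstar_first_category (-%R @^-1` A).
Proof.
case=> Ab [An [Anwd AAn]]; split=> [k /Ab/dual_ballN|]; first by rewrite opprK.
exists (fun n => -%R @^-1` An n); split=> [n|k /AAn[n _ Ank]].
  exact: wstar_nowhere_denseN.
by exists n.
Qed.

Lemma wstar_first_categoryU A B : wstar_first_category A ->
  wstar_first_category B -> wstar_first_category (A `|` B).
Proof.
case=> Ab [An [Anwd AAn]] [Bb [Bn [Bnwd BBn]]].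
split=> [k [/Ab|/Bb]//|].
exists (fun n => if odd n then Bn n./2 else An n./2); split=> [n|k].
  by case: (odd n).
case=> [/AAn[n _ Ank]|/BBn[n _ Bnk]].
  by exists n.*2 => //; rewrite odd_double doubleK.
by exists n.*2.+1 => //=; rewrite odd_double /= uphalf_double.
Qed.

Lemma wstar_first_category_sub A B :
  A `<=` B -> wstar_first_category B -> wstar_first_category A.
Proof.
move=> AB [Bb [Bn [Bnwd BBn]]]; split; first exact: subset_trans Bb.
by exists Bn; split => //; apply: subset_trans BBn.
Qed.

Lemma zero_dual_ball : dual_ball (0 : W -> R).
Proof. by split=> [a u v|w] /=; rewrite ?mulr0 ?addr0 ?normr0. Qed.

Lemma wstar_first_category0 : wstar_first_category (@set0 (W -> R)).
Proof.
split=> //; exists (fun => set0); split=> // n; split=> //.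
rewrite -subset0 => f [U [oU [Uf UA]]].
have [fb fA] := UA f Uf.
have oB : wstar_open (@dual_ball R W).
  by split=> // g gb; exists set0, 1; split=> //; split=> // k [].
by have [k []] := fA _ oB fb.
Qed.

Lemma wstar_second_category_avoid B M : wstar_second_category B ->
  wstar_first_category M -> exists k, [/\ B k, ~ M k & ~ M (- k)].
Proof.
case=> Bb nB M1; apply: contrapT => noB; apply: nB.
apply: (@wstar_first_category_sub _ (M `|` -%R @^-1` M)).
  by move=> k Bk; apply: contrapT => /not_orP[Mk Mnk]; apply: noB; exists k.
by apply: wstar_first_categoryU => //; exact: wstar_first_categoryN.
Qed.

End FirstCategory.

Section QuotientNorm.
Variables (R : realType) (W : normedModType R).
Implicit Types (f g : (W -> R) -> R) (A : set (W -> R)).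

Lemma mK_vanishing f : (forall k, dual_ball k -> f k = 0) -> mK f.
Proof.
move=> f0; split; first by exists 0 => k /f0 ->; rewrite normr0.
apply: (@wstar_first_category_sub _ _ _ set0); last exact: wstar_first_category0.
by move=> k [kb]; rewrite f0 ?eqxx.
Qed.

Lemma Ksupport_eq0 g k : dual_ball k -> ~ Ksupport g k -> g k = 0.
Proof. by move=> kb gk; apply: contrapT => /eqP g0; apply: gk. Qed.

Lemma Ksupnorm_ge0 f : 0 <= Ksupnorm f.
Proof.
have [fb|fnb] := pselect (has_ubound [set `|f k| | k in @dual_ball R W]).
  apply: le_trans (normr_ge0 (f 0)) _; apply: ub_le_sup => //.
  by exists 0 => //; exact: zero_dual_ball.
by rewrite /Ksupnorm sup_out // => -[].
Qed.

Lemma Ksupnorm_ge f k : Kbounded f -> dual_ball k -> `|f k| <= Ksupnorm f.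
Proof.
move=> [M fM] kb; apply: ub_le_sup; last by exists k.
by exists M => _ [k' k'b <-]; exact: fM.
Qed.

Lemma Ksupnorm_le f M : (forall k, dual_ball k -> `|f k| <= M) -> Ksupnorm f <= M.
Proof.
move=> fM; apply: ge_sup => [|_ [k kb <-]]; last exact: fM.
by exists `|f 0|, 0 => //; exact: zero_dual_ball.
Qed.

Lemma m0norm_le f M : (forall k, dual_ball k -> `|f k| <= M) -> m0norm f <= M.
Proof.
move=> fM; apply: le_trans (Ksupnorm_le (f := f \- 0) _).
  apply: ge_inf; last by exists 0 => //; exact: mK_vanishing.
  by exists 0 => _ [g _ <-]; exact: Ksupnorm_ge0.
by move=> k kb /=; rewrite subr0 fM.
Qed.

Lemma m0norm_ge f c : Kbounded f ->
  (forall g, mK g -> exists2 k, dual_ball k & c <= `|f k - g k|) ->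
  c <= m0norm f.
Proof.
move=> [M fM] fg; apply: lb_le_inf.
  by exists (Ksupnorm (f \- 0)), 0 => //; exact: mK_vanishing.
move=> _ [g mg <-]; have [k kb fgk] := fg g mg; have [[N gN] _] := mg.
apply: le_trans fgk (Ksupnorm_ge _ kb); exists (M + N) => k' k'b /=.
by rewrite (le_trans (ler_normB _ _)) // lerD ?fM ?gN.
Qed.

Lemma m0norm_ge_second_category A f c : wstar_second_category A ->
  Kbounded f -> (forall k, A k -> c <= `|f k| \/ c <= `|f (- k)|) ->
  c <= m0norm f.
Proof.
move=> A2 fb fA; apply: (m0norm_ge fb) => g [_ g1].
have [k [Ak gk gNk]] := wstar_second_category_avoid A2 g1.
have kb := A2.1 k Ak.
case: (fA k Ak) => fk; first by exists k; rewrite // (Ksupport_eq0 kb gk) subr0.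
exists (- k); first exact: dual_ballN.
by rewrite (Ksupport_eq0 (dual_ballN kb) gNk) subr0.
Qed.

End QuotientNorm.

Lemma disjoint_family_index (T I : Type) (B : I -> set T) :
  (forall a b, a <> b -> B a `&` B b = set0) ->
  exists idx : T -> option I, forall t a, idx t = Some a <-> B a t.
Proof.
move=> Bdisj.
have /choice[idx idxP] :
    forall t, exists o : option I, forall a, o = Some a <-> B a t.
  move=> t; have [[a Bat]|noB] := pselect (exists a, B a t).
    exists (Some a) => b; split=> [[<-]//|Bbt].
    have [->//|ab] := pselect (a = b).
    by have := Bdisj _ _ ab; rewrite -subset0 => /(_ t)[].
  by exists None => b; split=> // Bbt; case: noB; exists b.
by exists idx.
Qed.

Section Embedding.
Variables (R : realType) (Y Z W : normedModType R).
Variables (iZ : {linear Y -> Z}) (iW : Y -> W).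
Hypothesis iZ_isom : forall y, `|iZ y| = `|y|.
Hypothesis iW_isom : forall y, `|iW y| = `|y|.

Definition extends (k : W -> R) (Lk : Z -> R) :=
  [/\ scalar Lk, forall y, Lk (iZ y) = k (iW y) & forall z, `|Lk z| <= `|z|].

Lemma extendsN k Lk : extends (- k) Lk -> extends k (\- Lk).
Proof.
case=> Llin LY Lle; split=> [a u v|y|z] /=; rewrite ?normrN //.
  by rewrite Llin opprD mulrN.
by rewrite LY opprK.
Qed.

Lemma extendsD k Lk psi : extends k Lk -> extends 0 psi ->
  scalar (Lk \+ psi) /\ forall y, (Lk \+ psi) (iZ y) = k (iW y).
Proof.
case=> Llin LY _ [psilin psiY _]; split=> [a u v|y] /=.
  by rewrite Llin psilin addrACA mulrDr.
by rewrite LY psiY addr0.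
Qed.

Variables (I : Type) (B : I -> set (W -> R)).
Hypothesis B_second : forall a, wstar_second_category (B a).
Hypothesis B_antipodal : forall a b k, B a k -> ~ B b (- k).
Variable idx : (W -> R) -> option I.
Hypothesis idxP : forall k a, idx k = Some a <-> B a k.
Variable L : (W -> R) -> Z -> R.
Hypothesis L_extends : forall k, dual_ball k -> extends k (L k).
Variable phi : I -> Z -> R.
Hypothesis phi_extends : forall a, extends 0 (phi a).
Hypothesis phi_norming :
  forall z e, 0 < e -> exists a, quot_norm iZ z - e < phi a z.

Definition embed (z : Z) (k : W -> R) : R :=
  match idx k, idx (- k) with
  | Some a, _ => L k z + phi a z
  | None, Some a => - L (- k) z + phi a z
  | None, None => L k z
  end.

Lemma embed_decomposition k : dual_ball k ->
  exists Lk psi, [/\ extends k Lk, extends 0 psi & embed^~ k = Lk \+ psi].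
Proof.
move=> kb; rewrite /embed.
case: (idx k) => [a|].
  by exists (L k), (phi a); split; [exact: L_extends|exact: phi_extends|].
case Nk: (idx (- k)) => [a|].
  have Nkb : dual_ball (- k) by apply: (B_second a).1; apply/idxP.
  exists (\- L (- k)), (phi a).
  by split; [apply/extendsN/L_extends|exact: phi_extends|].
exists (L k), 0; split; [exact: L_extends| |by apply/funext => z /=; rewrite addr0].
by split=> [a u v|y|z] /=; rewrite ?fctE ?mulr0 ?addr0 ?normr0.
Qed.

Lemma embed_scalar k : dual_ball k -> scalar (embed^~ k).
Proof.
move=> /embed_decomposition[Lk [psi [Lext psiext ->]]].
by case: (extendsD Lext psiext).
Qed.

Lemma embed_iZ k y : dual_ball k -> embed (iZ y) k = k (iW y).
Proof.
move=> /embed_decomposition[Lk [psi [Lext psiext Ek]]].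
by rewrite -[embed _ k]/((embed^~ k) _) Ek; case: (extendsD Lext psiext).
Qed.

Lemma embed_le k z : dual_ball k -> `|embed z k| <= 2 * `|z|.
Proof.
move=> /embed_decomposition[Lk [psi [[_ _ Lle] [_ _ psile] Ek]]].
rewrite -[embed _ k]/((embed^~ k) _) Ek mulr2n mulrDl mul1r.
by rewrite (le_trans (ler_normD _ _)) // lerD.
Qed.

Lemma embed_bounded z : Kbounded (embed z).
Proof. by exists (2 * `|z|) => k; exact: embed_le. Qed.

Lemma embed_antipodal a k z : B a k -> embed z k + embed z (- k) = 2 * phi a z.
Proof.
move=> Bk; have idxk : idx k = Some a by apply/idxP.
have idxNk : idx (- k) = None.
  by case Nk: (idx (- k)) => [b|] //; move/idxP: Nk => /(B_antipodal Bk).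
by rewrite /embed idxk idxNk opprK idxk; ring.
Qed.

Lemma phi_le_m0norm a z : phi a z <= m0norm (embed z).
Proof.
apply: (m0norm_ge_second_category (B_second a) (embed_bounded z)) => k Bk.
have := embed_antipodal z Bk.
have := ler_norm (embed z k); have := ler_norm (embed z (- k)).
have [|] := leP (phi a z) `|embed z k|; [left|right]; lra.
Qed.

Lemma quot_norm_le_m0norm z : quot_norm iZ z <= m0norm (embed z).
Proof.
apply/ler_addgt0Pr => e /(phi_norming z)[a ?].
by have := phi_le_m0norm a z; lra.
Qed.

Lemma m0norm_embed_ge_Y y z :
  `|y| / 2 - 2 * `|z - iZ y| <= m0norm (embed z).
Proof.
have [->|y0] := eqVneq y 0.
  apply: le_trans (quot_norm_le_m0norm z); apply: le_trans (quot_norm_ge0 _ _).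
  by rewrite normr0 mul0r add0r oppr_le0 mulr_ge0.
have [h hb hy] := norming_functional (iW y).
have Oh : dual_ball h /\ `|y| / 2 < h (iW y).
  by split=> //; rewrite hy iW_isom; have := normr_gt0 y; rewrite y0; lra.
apply: (m0norm_ge_second_category
  (wstar_open_second_category (wstar_open_lt _ _) Oh) (embed_bounded z)).
move=> k [kb ky]; left.
have Ez : embed z k = k (iW y) + embed (z - iZ y) k.
  by rewrite -embed_iZ // -(scalarD (iZ y) (z - iZ y) (embed_scalar kb)) subrKC.
have := embed_le (z - iZ y) kb; have := ler_norm (embed z k).
by rewrite Ez ler_norml => ? /andP[? _]; lra.
Qed.

Lemma m0norm_embed_ge z : 10^-1 * `|z| <= m0norm (embed z).
Proof.
have [qz|/quot_norm_lt[y zy]] := leP (`|z| / 10) (quot_norm iZ z).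
  by apply: le_trans (quot_norm_le_m0norm z); lra.
have := m0norm_embed_ge_Y y z.
have : `|z| <= `|y| + `|z - iZ y|.
  by rewrite -(iZ_isom y) (le_trans _ (ler_normD _ _)) // addrC subrK.
have := normr_ge0 z; lra.
Qed.

Theorem embed_isomorphism :
  (forall z, Kbounded (embed z)) /\
  (forall (a : R) (z1 z2 : Z),
     mK (embed (a *: z1 + z2) \- (fun k => a * embed z1 k + embed z2 k))) /\
  (exists c C : R, 0 < c /\ 0 < C /\
     forall z, c * `|z| <= m0norm (embed z) /\ m0norm (embed z) <= C * `|z|) /\
  (forall y : Y, mK (embed (iZ y) \- (fun k => k (iW y)))).
Proof.
split; first exact: embed_bounded.
split.
  by move=> a z1 z2; apply: mK_vanishing => k kb; rewrite /= embed_scalar ?subrr.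
split; last by move=> y; apply: mK_vanishing => k kb; rewrite /= embed_iZ ?subrr.
exists 10^-1, 2; do 2!split=> //; move=> z; split; first exact: m0norm_embed_ge.
by apply: m0norm_le => k; exact: embed_le.
Qed.

End Embedding.

Theorem mainTheorem11 (R : realType)
  (Y Z W : completeNormedModType R)
  (iZ : {linear Y -> Z}) (iW : {linear Y -> W})
  (iZ_isom : forall y : Y, `|iZ y| = `|y|)
  (iW_isom : forall y : Y, `|iW y| = `|y|)
  (D : set Z) (hD : quot_dens_witness iZ D)
  (I : Type) (B : I -> set (W -> R))
  (hI : ([set: I] #= D)%card)
  (hB2 : forall a, wstar_second_category (B a))
  (hBdisj : forall a b, a <> b -> B a `&` B b = set0)
  (hBsym : forall a : I, forall b : I, forall f, B a f -> ~ B b (fun w => - f w)) :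
  exists E : Z -> (W -> R) -> R,
    (forall z, Kbounded (E z)) /\
    (forall (a : R) (z1 z2 : Z),
        mK (E (a *: z1 + z2) \- (fun k => a * E z1 k + E z2 k))) /\
    (exists c C : R, 0 < c /\ 0 < C /\
       forall z, c * `|z| <= m0norm (E z) /\ m0norm (E z) <= C * `|z|) /\
    (forall y : Y, mK (E (iZ y) \- (fun k => k (iW y)))).
Proof.
have iWZ y : `|iW y| <= `|iZ y| by rewrite iW_isom iZ_isom.
have /choice[L L_ext] : forall k, exists Lk, dual_ball k -> extends iZ iW k Lk.
  move=> k; have [kb|nkb] := pselect (dual_ball k); last by exists 0 => /nkb.
  by have [Lk ?] := dual_ball_extend iWZ kb; exists Lk.
move: hI; rewrite card_eq_le => /andP[_ /pcard_surjP[d dD]].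
have [phi [phi_lin phi_Y phi_le phi_norming]] := quot_norming_family hD.1 dD.
have phi_ext a : extends iZ iW 0 (phi a).
  by split; [exact: phi_lin|exact: phi_Y|exact: phi_le].
have [idx idxP] := disjoint_family_index hBdisj.
by exists (embed idx L phi); apply: embed_isomorphism.
Qed.
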